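(* Let $T$ be a hyper-recurrent operator on a Fréchet space $X$. Then for every positive integer $m$, both $T^m$ (acting on $X$) and $T_m=T\oplus\cdots\oplus T$ ($m$ copies, acting on $X^m$) are hyper-recurrent.
   Context: For a continuous linear operator $T$ on a Fréchet space $X$: $x$ is recurrent if $T^{\omega_n}x\to x$ for some strictly increasing sequence $(\omega_n)$ of positive integers; $\mathrm{Rec}(T)$ is the set of recurrent vectors. $\mathfrak{C}$ is the set of strictly increasing sequences $\omega=(\omega_n)$ of positive integers such that $T^{\omega_n}x\to x$ for some $x\neq 0$; $\mathfrak{L}(\omega)=\{x:T^{\omega_n}x\to x\}$. A vector $x\in\mathrm{Rec}(T)$ is hyper-recurrent if for every $\omega\in\mathfrak{C}$ with $x\in\mathfrak{L}(\omega)$, $\mathfrak{L}(\omega)$ is dense in $X$; $\mathrm{Hr}(T)$ denotes the set of hyper-recurrent vectors, and $T$ is hyper-recurrent if $T$ is recurrent (i.e. $\mathrm{Rec}(T)$ is dense) and $\mathrm{Hr}(T)\neq\emptyset$. *)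

From HB Require Import structures.
From mathcomp Require Import all_boot all_order all_algebra.
From mathcomp Require Import all_classical all_reals all_analysis.
Set Implicit Arguments. Unset Strict Implicit. Unset Printing Implicit Defensive.
Import Order.TTheory GRing.Theory Num.Theory.
Local Open Scope classical_set_scope.
Local Open Scope ring_scope.

(* A Fréchet space: a (locally convex, as built into [tvsType]) topological
   vector space that is Hausdorff, metrizable (0 has a countable
   neighbourhood base) and complete.  For metrizable tvs, completeness is
   sequential completeness w.r.t. the translation-invariant uniformity. *)
Definition frechet (K : numFieldType) (X : tvsType K) : Prop :=
  [/\ hausdorff_space X,
      (exists B : nat -> set X,
          (forall n, nbhs (0 : X) (B n)) /\
          (forall U, nbhs (0 : X) U -> exists n, B n `<=` U)) &
      (forall u : nat -> X,
          (forall U, nbhs (0 : X) U ->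
             exists N, forall n k, (N <= n)%N -> (N <= k)%N -> U (u n - u k)) ->
          exists l : X, u @ \oo --> l)].

Section Recurrence.
Variable X : PreTopologicalNmodule.type.
Variable T : X -> X.

Definition pos_incr (w : nat -> nat) : Prop :=
  (0 < w 0)%N /\ forall n, (w n < w n.+1)%N.

Definition Lset (w : nat -> nat) : set X :=
  [set x | (fun n => iter (w n) T x) @ \oo --> x].

Definition Cset : set (nat -> nat) :=
  [set w | pos_incr w /\ exists2 x, x <> 0 & Lset w x].

Definition Rec : set X :=
  [set x | exists2 w, pos_incr w & Lset w x].

Definition Hr : set X :=
  [set x | Rec x /\ forall w, Cset w -> Lset w x -> dense (Lset w)].

Definition hyper_recurrent : Prop := dense Rec /\ Hr !=set0.
End Recurrence.

(* Make [X^m] (row vectors 'rV[X]_m, product topology) a topological Nmodule. *)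
HB.instance Definition _ (X : PreTopologicalNmodule.type) (m n : nat) :=
  Topological.on 'M[X]_(m, n).

From HB Require Import structures.
From mathcomp Require Import all_boot all_order all_algebra.
From mathcomp Require Import all_classical all_reals all_analysis.
Set Implicit Arguments. Unset Strict Implicit. Unset Printing Implicit Defensive.
Import Order.TTheory GRing.Theory Num.Theory.
Local Open Scope classical_set_scope.
Local Open Scope ring_scope.

(* A recurrent vector x returns to each of its neighbourhoods at arbitrarily
   large times; by pigeonhole it does so along a fixed residue class r mod m,
   and by continuity of T the set of such return times is closed under
   addition, so x also returns along r * m = 0 mod m.  A countable base at 0
   turns this into times m w_n with T^(m w_n) x -> x.  Hence Rec T lies in
   Rec T^m, and since L_{T^m}(w) = L_T(m w), hyper-recurrence passes to T^m.
   For direct sums, L_{T_m}(w) = L_T(w)^m, so (x, ..., x) is hyper-recurrent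
   for T_m when x is for T, and a dense L_T(w) yields dense recurrent vectors. *)

Lemma dense_subset (Y : topologicalType) (A B : set Y) :
  A `<=` B -> dense A -> dense B.
Proof.
move=> AB dA O O0 oO; have [y [Oy Ay]] := dA O O0 oO.
by exists y; split => //; exact: AB.
Qed.

Lemma pos_incr_mull m w : (0 < m)%N -> pos_incr w -> pos_incr (fun n => m * w n)%N.
Proof.
move=> m0 [w0 wi]; split; first by rewrite muln_gt0 m0.
by move=> n; rewrite ltn_pmul2l.
Qed.

Lemma pos_incr_geq w : pos_incr w -> forall k, (k <= w k)%N.
Proof. by move=> [_ wi]; elim => [|k IH] //; exact: leq_ltn_trans IH (wi k). Qed.

Section Lset.
Variable Y : PreTopologicalNmodule.type.

Lemma Lset0 (f : Y -> Y) w : f 0 = 0 -> Lset f w 0.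
Proof.
move=> f0; rewrite /Lset /=.
under eq_fun do rewrite iter_fix //.
exact: cvg_cst.
Qed.

Lemma Lset_iter (f : Y -> Y) m w :
  Lset (iter m f) w = Lset f (fun n => m * w n)%N.
Proof.
rewrite /Lset; apply/seteqP; split => y /=;
  by rewrite (_ : (fun n => _) = (fun n => iter (m * w n) f y)) //;
     apply: funext => n; rewrite mulnC iterM.
Qed.

End Lset.

Section MatrixLset.
Variables (Y : PreTopologicalNmodule.type) (p q : nat).

Lemma iter_map_mx (f : Y -> Y) n (v : 'M[Y]_(p, q)) :
  iter n (map_mx f) v = map_mx (iter n f) v.
Proof.
elim: n => [|n IH]; first by apply/matrixP => i j; rewrite mxE.
by rewrite iterS IH; apply/matrixP => i j; rewrite !mxE iterS.
Qed.

Lemma cvg_mxP (u : nat -> 'M[Y]_(p, q)) (M : 'M[Y]_(p, q)) :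
  u @ \oo --> M <-> forall i j, (fun n => u n i j) @ \oo --> M i j.
Proof.
split=> [uM i j U /= MU|uM A [P MP PA]].
  apply: (uM [set N | U (N i j)]).
  exists (fun i' j' => if (i' == i) && (j' == j) then U else setT).
    by move=> i' j'; case: ifP => [/andP[/eqP-> /eqP->]|_] //; exact: filterT.
  by move=> N /(_ i j); rewrite !eqxx.
have uP : \forall n \near \oo, forall i j, P i j (u n i j).
  by apply: filter_forall => i; apply: filter_forall => j; exact: uM i j _ (MP i j).
by apply: filterS uP => n Pn; apply: PA.
Qed.

Lemma dense_mx (D : set Y) :
  dense D -> dense [set M : 'M[Y]_(p, q) | forall i j, D (M i j)].
Proof.
move=> dD O [M0 OM0] oO.
have [P MP PO] := open_nbhs_nbhs (conj oO OM0).
have /choice [g gP] : forall ij : 'I_p * 'I_q, exists y, P ij.1 ij.2 y /\ D y.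
  move=> [i j] /=; have := MP i j; rewrite nbhsE => -[Q [oQ Qm] QP].
  have [y [Qy Dy]] := dD Q (ex_intro _ _ Qm) oQ.
  by exists y; split => //; exact: QP.
exists (\matrix_(i, j) g (i, j)); split.
  by apply: PO => i j; rewrite mxE; exact: (gP (i, j)).1.
by move=> i j; rewrite mxE; exact: (gP (i, j)).2.
Qed.

Lemma Lset_map_mx (f : Y -> Y) w (v : 'M[Y]_(p, q)) :
  Lset (map_mx f) w v <-> forall i j, Lset f w (v i j).
Proof.
rewrite /Lset /=.
under eq_fun do rewrite iter_map_mx.
rewrite cvg_mxP; under eq_forall do under eq_forall do under eq_fun do rewrite mxE.
by [].
Qed.

End MatrixLset.

Section Returns.
Variables (K : numFieldType) (X : tvsType K) (T : X -> X).

Definition returns_along (S : nat -> Prop) (x : X) :=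
  forall U, nbhs x U -> forall N, exists n, [/\ (N <= n)%N, S n & U (iter n T x)].

Lemma Rec_returns_along x : Rec T x -> returns_along (fun=> True) x.
Proof.
move=> [w pw Lx] U xU N; have [N0 _ N0U] := Lx U xU.
exists (w (maxn N N0)); split => //; last exact: N0U (leq_maxr N N0).
exact: leq_trans (leq_maxl N N0) (pos_incr_geq pw _).
Qed.

Lemma returns_along_residue x m : (0 < m)%N -> returns_along (fun=> True) x ->
  exists r, returns_along (fun n => n = r %[mod m])%N x.
Proof.
move=> m0 xR; apply: contrapT => noR.
(* Inductively exclude the residues 0, ..., k - 1 near x; at k = m nothing is left. *)
have excl k : (k <= m)%N -> exists2 U, nbhs x U &
    exists N, forall n, (N <= n)%N -> U (iter n T x) -> (k <= n %% m)%N.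
  elim: k => [|k IH] km; first by exists setT; [exact: filterT | exists 0%N].
  have [U xU [N UN]] := IH (ltnW km).
  have [V [xV [M VM]]] : exists V, nbhs x V /\ exists M, forall n, (M <= n)%N ->
      V (iter n T x) -> (n %% m <> k)%N.
    apply: contrapT => noV; apply: noR; exists k => V xV M.
    apply: contrapT => noM; apply: noV; exists V; split => //; exists M => n Mn Vn nk.
    by apply: noM; exists n; split => //; rewrite nk (modn_small km).
  exists (U `&` V); first exact: filterI.
  exists (maxn N M) => n; rewrite geq_max => /andP[Nn Mn] [Un Vn].
  by rewrite ltn_neqAle UN // andbT; apply/eqP => /esym; exact: VM.
have [U xU [N UN]] := excl m (leqnn m).
have [n [Nn _ Un]] := xR U xU N.
by have := UN n Nn Un; rewrite leqNgt ltn_pmod.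
Qed.

Hypothesis Tc : continuous T.

Lemma continuous_iter n : continuous (iter n T).
Proof.
elim: n => [|n IH] x; first exact: cvg_id.
have -> : iter n.+1 T = T \o iter n T by apply: funext => y; rewrite iterS.
by apply: continuous_comp; [exact: IH | exact: Tc].
Qed.

Lemma returns_alongD x (S1 S2 S : nat -> Prop) :
  (forall a b, S1 a -> S2 b -> S (a + b)%N) ->
  returns_along S1 x -> returns_along S2 x -> returns_along S x.
Proof.
move=> S12 xR1 xR2 U; rewrite nbhsE; case=> O [oO Ox] OU N.
have [b [Nb S2b Ob]] := xR2 O (open_nbhs_nbhs (conj oO Ox)) N.
(* return to O after b steps, then to the preimage of O under T^b *)
have Obx : nbhs x (iter b T @^-1` O) by apply: continuous_iter; exact: open_nbhs_nbhs.
have [a [_ S1a Oa]] := xR1 _ Obx 0%N.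
exists (a + b)%N; split; [exact: leq_trans Nb (leq_addl _ _) | exact: S12 |].
by apply: OU; rewrite addnC iterD.
Qed.

Lemma returns_along_dvdn x m r : (0 < m)%N -> returns_along (fun n => n = r %[mod m])%N x ->
  returns_along (dvdn m) x.
Proof.
move=> m0 xr.
have xrk k : returns_along (fun n => n = r * k.+1 %[mod m])%N x.
  elim: k => [|k IH]; first by rewrite muln1.
  apply: returns_alongD IH xr => a b ea eb.
  by rewrite -modnDm ea eb modnDm [in RHS]mulnS addnC.
move=> U xU N; have [n [Nn nm Un]] := xrk m.-1 U xU N.
by exists n; split => //; rewrite /dvdn nm prednK // modnMl.
Qed.

Variable B : nat -> set X.
Hypothesis B0 : forall n, nbhs 0 (B n).
Hypothesis Bbase : forall U, nbhs 0 U -> exists n, B n `<=` U.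

Lemma returns_along_Lset x S : returns_along S x ->
  exists w, [/\ pos_incr w, forall k, S (w k) & Lset T w x].
Proof.
move=> xS.
pose D := fix D k := if k is k'.+1 then D k' `&` B k else B 0%N.
have D0 k : nbhs 0 (D k) by elim: k => [|k IH] /=; [exact: B0 | exact: filterI].
have DB j k : (j <= k)%N -> D k `<=` B j.
  elim: k => [|k IH]; first by rewrite leqn0 => /eqP ->.
  by rewrite leq_eqVlt => /orP[/eqP -> | /IH DkB] y [Dy By] //; exact: DkB.
have /choice [g gP] : forall kN : nat * nat, exists n,
    [/\ (kN.2 <= n)%N, S n & [set x + y | y in D kN.1] (iter n T x)].
  by move=> [k N]; apply: xS; exact: nbhsT.
pose w := fix w k := if k is k'.+1 then g (k, (w k').+1) else g (0, 1)%N.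
have wP k : [/\ ((if k is k'.+1 then (w k').+1 else 1) <= w k)%N, S (w k) &
    [set x + y | y in D k] (iter (w k) T x)].
  by case: k => [|k]; [exact: gP (0, 1)%N | exact: gP (k.+1, (w k).+1)].
exists w; split; [split | by move=> k; have [] := wP k |].
- by have [] := wP 0%N.
- by move=> n; have [] := wP n.+1.
move=> U /= xU; have := nbhsB (- x) xU; rewrite addNr => /Bbase [j Bj].
exists j => // k /= jk; have [_ _ [y Dy <-]] := wP k.
have [u Uu <-] := Bj _ (DB _ _ jk _ Dy).
by rewrite addrA subrr add0r.
Qed.

Lemma Rec_iter m : (0 < m)%N -> Rec T `<=` Rec (iter m T).
Proof.
move=> m0 x /Rec_returns_along /(returns_along_residue m0) [r /returns_along_dvdn].
move=> /(_ m0) /returns_along_Lset [s [[s0 sS] ms xs]].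
exists (fun n => s n %/ m)%N.
  split=> [|n]; first by rewrite divn_gt0 // dvdn_leq.
  by rewrite -(ltn_pmul2r m0) !divnK.
rewrite Lset_iter (_ : (fun n => _) = s) //.
by apply: funext => n; rewrite mulnC divnK.
Qed.

Lemma hyper_recurrent_iter m : (0 < m)%N -> hyper_recurrent T ->
  hyper_recurrent (iter m T).
Proof.
move=> m0 [dRec [x [Rx xHr]]]; split; first exact: dense_subset (Rec_iter m0) dRec.
exists x; split; first exact: Rec_iter.
move=> w [pw [y y0]]; rewrite !Lset_iter => Ly Lx.
exact: xHr _ (conj (pos_incr_mull m0 pw) (ex_intro2 _ _ y y0 Ly)) Lx.
Qed.

End Returns.

Section DirectSum.
Variables (Y : PreTopologicalNmodule.type) (f : Y -> Y).
Hypothesis f0 : f 0 = 0.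

Lemma hyper_recurrent_dense_Lset : hyper_recurrent f ->
  exists2 w, pos_incr w & dense (Lset f w).
Proof.
move=> [dRec [x [[w0 pw0 Lx0] xHr]]].
have [x0|x_neq0] := pselect (x = 0); last first.
  by exists w0 => //; exact: xHr w0 (conj pw0 (ex_intro2 _ _ x x_neq0 Lx0)) Lx0.
have [[w [pw Cw]]|noC] := pselect (Cset f !=set0).
  by exists w => //; apply: xHr; rewrite // x0; exact: Lset0.
(* if no sequence makes a nonzero vector recurrent, then Rec f = [set 0] *)
exists w0 => //; apply: dense_subset dRec => y [w pw Ly].
have [->|y_neq0] := pselect (y = 0); first exact: Lset0.
by exfalso; apply: noC; exists w; split => //; exists y.
Qed.

Lemma hyper_recurrent_map_mx p q : (0 < p)%N -> (0 < q)%N -> hyper_recurrent f ->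
  hyper_recurrent (fun v : 'M[Y]_(p, q) => map_mx f v).
Proof.
move=> p0 q0 hf; have [w pw dL] := hyper_recurrent_dense_Lset hf.
case: hf => _ [x [[w0 pw0 Lx0] xHr]]; split.
  apply: dense_subset (dense_mx dL) => M LM.
  by exists w => //; exact/Lset_map_mx.
exists (const_mx x); split.
  by exists w0 => //; apply/Lset_map_mx => i j; rewrite mxE.
move=> w' [pw' [v v_neq0 /Lset_map_mx Lv]] /Lset_map_mx Lx.
have [i [j vij]] : exists i j, v i j <> 0.
  apply: contrapT => v0; apply: v_neq0; apply/matrixP => i j; rewrite !mxE.
  by apply: contrapT => vij; apply: v0; exists i, j.
have Cw' : Cset f w' by split => //; exists (v i j).
have := Lx (Ordinal p0) (Ordinal q0); rewrite mxE => /(xHr _ Cw') /(@dense_mx _ p q) dLx.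
by apply: dense_subset dLx => M LM; exact/Lset_map_mx.
Qed.

End DirectSum.

Theorem proposition4p10 (K : numFieldType) (X : tvsType K)
  (T : {linear X -> X}) :
  frechet X -> continuous T -> hyper_recurrent T ->
  forall m : nat, (0 < m)%N ->
    hyper_recurrent (iter m T) /\
    hyper_recurrent (fun v : 'rV[X]_m => map_mx T v).
Proof.
move=> [_ [B [B0 Bbase]] _] Tc hT m m0; split.
  exact (hyper_recurrent_iter Tc B0 Bbase m0 hT).
exact (hyper_recurrent_map_mx (linear0 T) (ltn0Sn 0) m0 hT).
Qed.
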